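(* Assume (A1) and (A2). For all $x,v,\tilde x,\tilde v\in\mathbb R^d$, \[|H(x,v)-H(\tilde x,\tilde v)|\le C_{dH,1}\,r(x,\tilde x,v,\tilde v)+C_{dH,2}\,r(x,\tilde x,v,\tilde v)\Big(\sqrt{H(x,v)}+\sqrt{H(\tilde x,\tilde v)}\Big),\] where $C_{dH,1}=\frac{24|\nabla U(0)|}\alpha$ and $C_{dH,2}=\frac{24L_U}{\alpha\sqrt\lambda}+\frac{6(1-\gamma)+\lambda-3}{\alpha\sqrt\lambda}+2\sqrt3\max\big(1,\frac1{2\alpha}\big)$.
   Context: $U\in\mathcal C^1(\mathbb R^d)$. (A1): $U\ge0$ and there exist $\lambda>0$, $A\ge0$ with $\tfrac12\nabla U(x)\cdot x\ge\lambda(U(x)+|x|^2/4)-A$ for all $x$. (A2): $\nabla U$ is $L_U$-Lipschitz, $L_U>0$. Set $\gamma=\frac{\lambda}{2(\lambda+1)}$, $H(x,v)=24U(x)+(6(1-\gamma)+\lambda)|x|^2+12x\cdot v+12|v|^2$, $\alpha=L_U+\frac\lambda4$, and $r(x,\tilde x,v,\tilde v)=\alpha|x-\tilde x|+|x-\tilde x+v-\tilde v|$. *)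

From HB Require Import structures.
From mathcomp Require Import all_boot all_order all_algebra.
From mathcomp Require Import all_classical all_reals all_analysis.
Set Implicit Arguments. Unset Strict Implicit. Unset Printing Implicit Defensive.
Import Order.TTheory GRing.Theory Num.Theory.
Import numFieldNormedType.Exports.
Local Open Scope ring_scope.

Section Defs.
Variables (R : realType) (d : nat).

Definition dotv (x y : 'rV[R]_d) : R := \sum_(i < d) x 0 i * y 0 i.
Definition enorm (x : 'rV[R]_d) : R := Num.sqrt (dotv x x).

Definition gam (lam : R) : R := lam / (2 * (lam + 1)).
Definition alph (LU lam : R) : R := LU + lam / 4.

Definition Hfun (U : 'rV[R]_d -> R) (lam : R) (x v : 'rV[R]_d) : R :=
  24 * U x + (6 * (1 - gam lam) + lam) * enorm x ^+ 2 + 12 * dotv x v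
  + 12 * enorm v ^+ 2.

Definition rdist (LU lam : R) (x xt v vt : 'rV[R]_d) : R :=
  alph LU lam * enorm (x - xt) + enorm (x - xt + (v - vt)).

Definition CdH1 (gU : 'rV[R]_d -> 'rV[R]_d) (LU lam : R) : R :=
  24 * enorm (gU 0) / alph LU lam.

Definition CdH2 (LU lam : R) : R :=
  24 * LU / (alph LU lam * Num.sqrt lam)
  + (6 * (1 - gam lam) + lam - 3) / (alph LU lam * Num.sqrt lam)
  + 2 * Num.sqrt 3 * Num.max 1 (1 / (2 * alph LU lam)).

End Defs.

From HB Require Import structures.
From mathcomp Require Import all_boot all_order all_algebra.
From mathcomp Require Import all_classical all_reals all_analysis.
From mathcomp Require Import ring lra.
Import Order.TTheory GRing.Theory Num.Theory.
Import numFieldNormedType.Exports.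
Local Open Scope ring_scope.

(* Completing the square, H(x,v) = 24 U(x) + (3 - 6 gam + lam) |x|^2 + 3 |x + 2v|^2,
   and 3 - 6 gam + lam >= lam, so sqrt H dominates sqrt lam |x| and sqrt 3 |x + 2v|.
   Each of the three terms of H(x,v) - H(xt,vt) is then a difference of the form
   f(a) - f(b) bounded by |a - b| times a factor linear in |x|, |xt| (resp. |x + 2v|,
   |xt + 2vt|): for U by the mean value theorem along the segment [xt, x] and the
   Lipschitz bound |gU z| <= |gU 0| + LU |z|, for the squares by a^2 - b^2 =
   (a - b)(a + b).  Finally |x - xt| <= r / alph and |(x + 2v) - (xt + 2vt)| <=
   2 max(1, 1/(2 alph)) r. *)

Set Implicit Arguments. Unset Strict Implicit.

Lemma quadratic_ge0_discriminant (R : realFieldType) (a b c : R) : 0 <= c ->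
  (forall t, 0 <= a - 2 * t * b + t ^+ 2 * c) -> b ^+ 2 <= a * c.
Proof.
move=> c_ge0 hq; have [c0|c_neq0] := eqVneq c 0.
  have [b0|b_neq0] := eqVneq b 0; first by rewrite b0 c0 expr0n mulr0.
  have := hq ((a + 1) / (2 * b)).
  have -> : a - 2 * ((a + 1) / (2 * b)) * b + ((a + 1) / (2 * b)) ^+ 2 * c = -1.
    by rewrite c0; field; rewrite b_neq0.
  by move=> ?; lra.
have c_gt0 : 0 < c by rewrite lt_def c_neq0.
have := hq (b / c).
have -> : a - 2 * (b / c) * b + (b / c) ^+ 2 * c = (a * c - b ^+ 2) / c by field.
by rewrite pmulr_lge0 ?invr_gt0 // subr_ge0.
Qed.

Section Euclidean.
Variables (R : realType) (d : nat).
Implicit Types x y z : 'rV[R]_d.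

Lemma dotvC x y : dotv x y = dotv y x.
Proof. by apply: eq_bigr => i _; rewrite mulrC. Qed.

Lemma dotvDl x y z : dotv (x + y) z = dotv x z + dotv y z.
Proof. by rewrite /dotv -big_split; apply: eq_bigr => i _; rewrite mxE mulrDl. Qed.

Lemma dotvBl x y z : dotv (x - y) z = dotv x z - dotv y z.
Proof. by rewrite /dotv -sumrB; apply: eq_bigr => i _; rewrite !mxE mulrBl. Qed.

Lemma dotvZl (c : R) x y : dotv (c *: x) y = c * dotv x y.
Proof. by rewrite /dotv mulr_sumr; apply: eq_bigr => i _; rewrite !mxE mulrA. Qed.

Lemma dotvDr x y z : dotv z (x + y) = dotv z x + dotv z y.
Proof. by rewrite dotvC dotvDl !(dotvC z). Qed.

Lemma dotvBr x y z : dotv z (x - y) = dotv z x - dotv z y.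
Proof. by rewrite dotvC dotvBl !(dotvC z). Qed.

Lemma dotvZr (c : R) x y : dotv y (c *: x) = c * dotv y x.
Proof. by rewrite dotvC dotvZl dotvC. Qed.

Lemma dotv_ge0 x : 0 <= dotv x x.
Proof. by apply: sumr_ge0 => i _; rewrite -expr2 sqr_ge0. Qed.

Lemma enorm_ge0 x : 0 <= enorm x.
Proof. exact: sqrtr_ge0. Qed.

Lemma sqr_enorm x : enorm x ^+ 2 = dotv x x.
Proof. by rewrite sqr_sqrtr // dotv_ge0. Qed.

Lemma enormZ (c : R) x : enorm (c *: x) = `|c| * enorm x.
Proof. by rewrite /enorm dotvZl dotvZr mulrA -expr2 sqrtrM ?sqr_ge0 // sqrtr_sqr. Qed.

Lemma enormN x : enorm (- x) = enorm x.
Proof. by rewrite -scaleN1r enormZ normrN normr1 mul1r. Qed.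

Lemma dotv_CauchySchwarz x y : `|dotv x y| <= enorm x * enorm y.
Proof.
have sqr_le : `|dotv x y| ^+ 2 <= (enorm x * enorm y) ^+ 2.
  rewrite real_normK ?num_real // exprMn !sqr_enorm.
  apply: quadratic_ge0_discriminant; first exact: dotv_ge0.
  move=> t; have := dotv_ge0 (x - t *: y).
  rewrite !(dotvBl, dotvBr, dotvZl, dotvZr) (dotvC y x).
  by congr (_ <= _); ring.
by move: sqr_le; rewrite ler_sqr ?nnegrE ?normr_ge0 ?mulr_ge0 ?enorm_ge0.
Qed.

Lemma ler_enormD x y : enorm (x + y) <= enorm x + enorm y.
Proof.
have sqr_le : enorm (x + y) ^+ 2 <= (enorm x + enorm y) ^+ 2.
  rewrite sqr_enorm !(dotvDl, dotvDr) sqrrD !sqr_enorm (dotvC y x).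
  have := dotv_CauchySchwarz x y; have := ler_norm (dotv x y); lra.
by move: sqr_le; rewrite ler_sqr ?nnegrE ?addr_ge0 ?enorm_ge0.
Qed.

Lemma ler_enormB x y : enorm (x - y) <= enorm x + enorm y.
Proof. by rewrite -(enormN y) ler_enormD. Qed.

Lemma ler_dist_enorm x y : `|enorm x - enorm y| <= enorm (x - y).
Proof.
have lex : enorm x <= enorm (x - y) + enorm y by rewrite -{1}(subrK y x) ler_enormD.
have ley : enorm y <= enorm (x - y) + enorm x.
  by rewrite -(enormN (x - y)) opprB -{1}(subrK x y) ler_enormD.
rewrite ler_norml; apply/andP; split; lra.
Qed.

Lemma enorm_convex (c : R) x y : 0 <= c <= 1 ->
  enorm (c *: x + (1 - c) *: y) <= c * enorm x + (1 - c) * enorm y.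
Proof.
case/andP=> c_ge0 c_le1; apply: le_trans (ler_enormD _ _) _.
by rewrite !enormZ ger0_norm // ger0_norm // subr_ge0.
Qed.

End Euclidean.

Section GradientLipschitz.
Variables (R : realType) (d : nat) (U : 'rV[R]_d -> R) (gU : 'rV[R]_d -> 'rV[R]_d).
Variables LU : R.
Hypotheses (hLU : 0 <= LU) (hdiff : forall x, differentiable U x)
  (hgrad : forall x v, 'D_v U x = dotv (gU x) v)
  (hA2 : forall x y, enorm (gU x - gU y) <= LU * enorm (x - y)).

Lemma is_derive_along_line (y D : 'rV[R]_d) (t : R) :
  is_derive t 1 (fun s => U (s *: D + y)) (dotv (gU (t *: D + y)) D).
Proof.
set g := fun s => U (s *: D + y).
have quotient_eq : (fun h : R => h^-1 *: ((g \o shift t) (h *: 1) - g t)) =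
    (fun h : R => h^-1 *: ((U \o shift (t *: D + y)) (h *: D) - U (t *: D + y))).
  by apply: funext => h; rewrite /g /shift /= [h%:A]mulr1 scalerDl addrA.
split; first by rewrite /derivable quotient_eq; exact: diff_derivable.
by rewrite /derive quotient_eq; exact: hgrad.
Qed.

Lemma enorm_grad_le z : enorm (gU z) <= enorm (gU 0) + LU * enorm z.
Proof.
rewrite -{1}(subrK (gU 0) (gU z)); apply: le_trans (ler_enormD _ _) _.
by have := hA2 z 0; rewrite subr0; lra.
Qed.

Lemma U_increment_le x y :
  `|U x - U y| <= (enorm (gU 0) + LU * (enorm x + enorm y)) * enorm (x - y).
Proof.
pose g s := U (s *: (x - y) + y).
have g_cont : {within `[0, 1], continuous g}%classic.
  apply: derivable_within_continuous => t _.
  exact: (@ex_derive _ _ _ _ _ _ _ (is_derive_along_line y (x - y) t)).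
have [c] := MVT_segment ler01 (fun t _ => is_derive_along_line y (x - y) t) g_cont.
rewrite in_itv /= => c01; rewrite /g scale1r subrK scale0r add0r subr0 mulr1 => ->.
set z := c *: (x - y) + y.
have z_le : enorm z <= enorm x + enorm y.
  have -> : z = c *: x + (1 - c) *: y by apply/matrixP => i j; rewrite !mxE; ring.
  apply: le_trans (enorm_convex x y c01) _; case/andP: c01 => c0 c1.
  by have := enorm_ge0 x; have := enorm_ge0 y; nra.
apply: le_trans (dotv_CauchySchwarz _ _) _; apply: ler_wpM2r; first exact: enorm_ge0.
by apply: le_trans (enorm_grad_le z) _; rewrite lerD2l ler_wpM2l.
Qed.

End GradientLipschitz.

Lemma gam_le_half (R : realType) (lam : R) : 0 <= lam -> gam lam <= 1 / 2.
Proof.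
move=> lam_ge0; rewrite /gam ler_pdivrMr; last by rewrite mulr_gt0 //; lra.
have -> : 1 / 2 * (2 * (lam + 1)) = lam + 1 by field.
lra.
Qed.

Lemma alph_gt0 (R : realType) (LU lam : R) : 0 < LU -> 0 <= lam -> 0 < alph LU lam.
Proof. by rewrite /alph; lra. Qed.

Lemma ler_sqrtM_sqr (R : rcfType) (a b h : R) :
  0 <= a -> 0 <= b -> a * b ^+ 2 <= h -> Num.sqrt a * b <= Num.sqrt h.
Proof. by move=> a0 b0 le_h; rewrite -(ger0_norm b0) -sqrtr_sqr -sqrtrM // ler_wsqrtr. Qed.

Section HamiltonianIncrement.
Variables (R : realType) (d : nat) (U : 'rV[R]_d -> R) (gU : 'rV[R]_d -> 'rV[R]_d).
Variables (lam LU : R).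
Hypotheses (hlam : 0 < lam) (hLU : 0 < LU) (hU0 : forall x, 0 <= U x).
Hypotheses (hdiff : forall x, differentiable U x)
  (hgrad : forall x v, 'D_v U x = dotv (gU x) v)
  (hA2 : forall x y, enorm (gU x - gU y) <= LU * enorm (x - y)).

Local Notation H := (Hfun U lam).
Local Notation kappa := (6 * (1 - gam lam) + lam - 3).
Local Notation al := (alph LU lam).

Lemma Hfun_square y w :
  H y w = 24 * U y + kappa * enorm y ^+ 2 + 3 * enorm (y + 2 *: w) ^+ 2.
Proof.
by rewrite /Hfun !sqr_enorm !(dotvDl, dotvDr, dotvZl, dotvZr) (dotvC w y); ring.
Qed.

Lemma kappa_ge_lam : lam <= kappa.
Proof. by have := gam_le_half (ltW hlam); lra. Qed.

Lemma sqrt_lam_enorm_le y w : Num.sqrt lam * enorm y <= Num.sqrt (H y w).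
Proof.
apply: ler_sqrtM_sqr; [exact: ltW | exact: enorm_ge0 | rewrite Hfun_square].
have := ler_wpM2r (sqr_ge0 (enorm y)) kappa_ge_lam.
by have := hU0 y; have := sqr_ge0 (enorm (y + 2 *: w)); lra.
Qed.

Lemma sqrt3_enorm_le y w : Num.sqrt 3 * enorm (y + 2 *: w) <= Num.sqrt (H y w).
Proof.
apply: ler_sqrtM_sqr => //; first exact: enorm_ge0.
have := mulr_ge0 (le_trans (ltW hlam) kappa_ge_lam) (sqr_ge0 (enorm y)).
by rewrite Hfun_square; have := hU0 y; lra.
Qed.

Variables x v xt vt : 'rV[R]_d.

Local Notation r := (rdist LU lam x xt v vt).
Local Notation S := (Num.sqrt (H x v) + Num.sqrt (H xt vt)).

Lemma Hfun_sub : H x v - H xt vt =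
  24 * (U x - U xt) + kappa * (enorm x ^+ 2 - enorm xt ^+ 2)
  + 3 * (enorm (x + 2 *: v) ^+ 2 - enorm (xt + 2 *: vt) ^+ 2).
Proof. by rewrite !Hfun_square; ring. Qed.

Lemma alph_enorm_le_rdist : al * enorm (x - xt) <= r.
Proof. by rewrite /rdist lerDl enorm_ge0. Qed.

Lemma enorm_sum_mul_sub_le :
  (enorm x + enorm xt) * enorm (x - xt) <= r * S / (al * Num.sqrt lam).
Proof.
have al_gt0 := alph_gt0 hLU (ltW hlam).
have al_sl_gt0 : 0 < al * Num.sqrt lam by rewrite mulr_gt0 ?sqrtr_gt0.
rewrite ler_pdivlMr //.
have -> : (enorm x + enorm xt) * enorm (x - xt) * (al * Num.sqrt lam) =
    (al * enorm (x - xt)) * (Num.sqrt lam * enorm x + Num.sqrt lam * enorm xt) by ring.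
apply: ler_pM.
- exact: mulr_ge0 (ltW al_gt0) (enorm_ge0 _).
- by rewrite addr_ge0 // mulr_ge0 ?sqrtr_ge0 ?enorm_ge0.
- exact: alph_enorm_le_rdist.
- by rewrite lerD ?sqrt_lam_enorm_le.
Qed.

Lemma potential_increment_le :
  `|24 * (U x - U xt)|
    <= 24 * enorm (gU 0) / al * r + 24 * LU / (al * Num.sqrt lam) * r * S.
Proof.
have al_gt0 := alph_gt0 hLU (ltW hlam).
rewrite normrM ger0_norm //.
have := U_increment_le (ltW hLU) hdiff hgrad hA2 x xt.
have := ler_wpM2l (ltW hLU) enorm_sum_mul_sub_le.
have g0_le : enorm (gU 0) * enorm (x - xt) <= enorm (gU 0) / al * r.
  rewrite mulrAC -mulrA ler_wpM2l ?enorm_ge0 // ler_pdivlMr //.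
  by rewrite mulrC alph_enorm_le_rdist.
have -> : 24 * LU / (al * Num.sqrt lam) * r * S = 24 * (LU * (r * S / (al * Num.sqrt lam))).
  by ring.
lra.
Qed.

Lemma position_increment_le :
  `|kappa * (enorm x ^+ 2 - enorm xt ^+ 2)| <= kappa / (al * Num.sqrt lam) * r * S.
Proof.
have kappa_ge0 : 0 <= kappa := le_trans (ltW hlam) kappa_ge_lam.
rewrite subr_sqr !normrM (ger0_norm kappa_ge0) (ger0_norm (addr_ge0 (enorm_ge0 x) (enorm_ge0 xt))).
rewrite -!mulrA ler_wpM2l // mulrC [_^-1 * _]mulrC.
apply: le_trans enorm_sum_mul_sub_le.
by rewrite ler_wpM2l ?addr_ge0 ?enorm_ge0 ?ler_dist_enorm.
Qed.

Lemma momentum_dist_le :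
  enorm ((x + 2 *: v) - (xt + 2 *: vt)) <= 2 * Num.max 1 (1 / (2 * al)) * r.
Proof.
have al_gt0 := alph_gt0 hLU (ltW hlam).
set M := Num.max 1 (1 / (2 * al)).
have M_ge1 : 1 <= M by rewrite le_max lexx.
have alM_ge1 : 1 <= 2 * al * M.
  have : 1 / (2 * al) <= M by rewrite le_max lexx orbT.
  by rewrite ler_pdivrMr ?mulr_gt0 // mulrC.
have -> : x + 2 *: v - (xt + 2 *: vt) = 2 *: (x - xt + (v - vt)) - (x - xt).
  by apply/matrixP => i j; rewrite !mxE; ring.
apply: le_trans (ler_enormB _ _) _; rewrite enormZ ger0_norm // /rdist.
have := enorm_ge0 (x - xt); have := enorm_ge0 (x - xt + (v - vt)); nra.
Qed.

Lemma momentum_increment_le :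
  `|3 * (enorm (x + 2 *: v) ^+ 2 - enorm (xt + 2 *: vt) ^+ 2)|
    <= 2 * Num.sqrt 3 * Num.max 1 (1 / (2 * al)) * r * S.
Proof.
set w := x + 2 *: v; set wt := xt + 2 *: vt.
have sqrt3_gt0 : 0 < Num.sqrt 3 :> R by rewrite sqrtr_gt0.
have -> : 3 * (enorm w ^+ 2 - enorm wt ^+ 2) =
    Num.sqrt 3 * ((enorm w - enorm wt) * (Num.sqrt 3 * enorm w + Num.sqrt 3 * enorm wt)).
  by rewrite mulrA -[X in X * _ = _](@sqr_sqrtr _ 3) // subr_sqr; ring.
have S_ge0 : 0 <= Num.sqrt 3 * enorm w + Num.sqrt 3 * enorm wt.
  by rewrite addr_ge0 ?mulr_ge0 ?sqrtr_ge0 ?enorm_ge0.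
have -> : 2 * Num.sqrt 3 * Num.max 1 (1 / (2 * al)) * r * S =
    Num.sqrt 3 * (2 * Num.max 1 (1 / (2 * al)) * r * S) by ring.
rewrite !normrM ger0_norm ?sqrtr_ge0 // (ger0_norm S_ge0) ler_wpM2l ?sqrtr_ge0 //.
apply: ler_pM => //.
  exact: le_trans (ler_dist_enorm _ _) momentum_dist_le.
by rewrite lerD ?sqrt3_enorm_le.
Qed.

End HamiltonianIncrement.

Unset Implicit Arguments. Set Strict Implicit.

Theorem lemma2p7 (R : realType) (d : nat) (U : 'rV[R]_d -> R)
  (gU : 'rV[R]_d -> 'rV[R]_d) (lam A LU : R)
  (* U is C^1 with gradient gU *)
  (hdiff : forall x, differentiable U x)
  (hgrad : forall x v, 'D_v U x = dotv (gU x) v)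
  (hgcont : continuous gU)
  (* (A1) *)
  (hlam : 0 < lam) (hA : 0 <= A)
  (hU0 : forall x, 0 <= U x)
  (hA1 : forall x, dotv (gU x) x / 2 >= lam * (U x + enorm x ^+ 2 / 4) - A)
  (* (A2) *)
  (hLU : 0 < LU)
  (hA2 : forall x y, enorm (gU x - gU y) <= LU * enorm (x - y)) :
  forall x v xt vt : 'rV[R]_d,
    `| Hfun U lam x v - Hfun U lam xt vt |
    <= CdH1 gU LU lam * rdist LU lam x xt v vt
       + CdH2 LU lam * rdist LU lam x xt v vt
         * (Num.sqrt (Hfun U lam x v) + Num.sqrt (Hfun U lam xt vt)).
Proof.
move=> x v xt vt; rewrite Hfun_sub /CdH1 /CdH2.
apply: le_trans (ler_normD _ _) _; apply: le_trans (lerD (ler_normD _ _) (lexx _)) _.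
apply: le_trans (lerD (lerD (potential_increment_le hlam hLU hU0 hdiff hgrad hA2 x v xt vt)
  (position_increment_le hlam hLU hU0 x v xt vt))
  (momentum_increment_le hlam hLU hU0 x v xt vt)) _.
lra.
Qed.
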